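(* Let $p$ be a prime, $n\ge1$, and let $V,W\subset\mathbb{F}_{p^n}$ be $\mathbb{F}_p$-subspaces with $\dim_{\mathbb{F}_p}V+\dim_{\mathbb{F}_p}W\le n$. Then there exists $z\in\mathbb{F}_{p^n}^\times$ such that $V\cap zW=\{0\}$, where $zW=\{zw: w\in W\}$. *)

From HB Require Import structures.
From mathcomp Require Import all_boot all_order all_algebra all_field.
Set Implicit Arguments. Unset Strict Implicit. Unset Printing Implicit Defensive.

From HB Require Import structures.
From mathcomp Require Import all_boot all_order all_algebra all_field.
From mathcomp Require Import zify.
Import GRing.Theory.
Local Open Scope ring_scope.

(* The bad multipliers z, those with V :&: zW <> 0, are the quotients v / w of
   nonzero v in V and w in W: at most (q^a - 1)(q^b - 1) of them, where
   q = #|F|, a = dim V, b = dim W, n = [L : F].  Since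
   (q^a - 1)(q^b - 1) + (q^a - 1) + (q^b - 1) = q^(a+b) - 1 <= q^n - 1,
   they cannot exhaust the q^n - 1 nonzero elements unless a = b = n = 0. *)

Lemma predn_expn_mul_lt (q a b n : nat) :
  (1 < q)%N -> (0 < n)%N -> (a + b <= n)%N ->
  ((q ^ a).-1 * (q ^ b).-1 < (q ^ n).-1)%N.
Proof.
move=> q_gt1 n_gt0 le_abn.
have q_gt0 : (0 < q)%N by apply: ltnW.
have qn_gt1 : (1 < q ^ n)%N by rewrite -{1}(expn0 q) ltn_exp2l.
have [-> | a_gt0] := posnP a; first by rewrite expn0 mul0n; lia.
have [-> | b_gt0] := posnP b; first by rewrite expn0 muln0; lia.
have qa_ge_q : (q <= q ^ a)%N by rewrite -{1}(expn1 q) leq_pexp2l.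
have qb_ge_q : (q <= q ^ b)%N by rewrite -{1}(expn1 q) leq_pexp2l.
have : (q ^ a * q ^ b <= q ^ n)%N by rewrite -expnD leq_pexp2l.
move: (q ^ a)%N (q ^ b)%N (q ^ n)%N qa_ge_q qb_ge_q qn_gt1 => x y z; nia.
Qed.

Lemma exists_nonzero_notin_quotients (K : finFieldType) (A B : {set K}) :
  (#|A| * #|B| < #|K|.-1)%N ->
  exists2 z : K, z != 0 & z \notin [set x.1 / x.2 | x in setX A B].
Proof.
move=> lt_AB_K; set Q := [set _ | x in _].
have lt_Q_nonzero : (#|Q| < #|[set~ (0%R : K)]|)%N.
  by rewrite cardsC1; apply: leq_ltn_trans (leq_imset_card _ _) _; rewrite cardsX.
have /subsetPn[z] : ~~ ([set~ (0%R : K)] \subset Q).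
  by apply: contraL lt_Q_nonzero => /subset_leq_card; rewrite leqNgt.
by rewrite !inE => z0 zQ; exists z.
Qed.

Lemma card_vspace_nonzero (F : finFieldType) (L : fieldExtType F) (V : {vspace L}) :
  #|[set v : finvect_type L | v \in V & v != 0]| = (#|F| ^ \dim V).-1.
Proof.
rewrite -(card_vspace (V : {vspace finvect_type L})) [in RHS](cardD1 0) mem0v add1n /=.
by apply: eq_card => v; rewrite !inE andbC.
Qed.

Lemma card_finvect_fieldExt (F : finFieldType) (L : fieldExtType F) :
  #|finvect_type L| = (#|F| ^ \dim {:L})%N.
Proof. by rewrite -(card_vspace {:finvect_type L}); apply: eq_card => v; rewrite memvf. Qed.

Theorem exists_nonzero_mul_meet_trivial (F : finFieldType) (L : fieldExtType F)
    (V W : {vspace L}) :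
  (0 < \dim {:L})%N -> (\dim V + \dim W <= \dim {:L})%N ->
  exists z : L, z != 0 /\
    (forall v : L, v \in V -> (exists2 w : L, w \in W & v = z * w) -> v = 0).
Proof.
move=> dimL_gt0 le_dimVW_L.
pose nonzero (U : {vspace L}) := [set u : finvect_type L | u \in U & u != 0].
have [z z0 zQ] : exists2 z : finvect_type L, z != 0 &
    z \notin [set x.1 / x.2 | x in setX (nonzero V) (nonzero W)].
  apply: exists_nonzero_notin_quotients.
  rewrite !card_vspace_nonzero card_finvect_fieldExt.
  exact: predn_expn_mul_lt (finNzRing_gt1 F) dimL_gt0 le_dimVW_L.
exists z; split=> // _ /[swap] -[w wW ->] zwV.
apply/eqP; apply: contraNT zQ => zw0.
have w0 : w != 0 by apply: contraNneq zw0 => ->; rewrite mulr0.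
by apply/imsetP; exists (z * w, w); rewrite ?inE ?zwV ?zw0 ?wW ?w0 //= mulfK.
Qed.

Theorem mainTheorem2 (p n : nat) (p_prime : prime p) (n_ge1 : (1 <= n)%N)
  (L : fieldExtType 'F_p) (dimL : \dim (fullv : {vspace L}) = n)
  (V W : {vspace L}) (hdim : (\dim V + \dim W <= n)%N) :
  exists z : L, z != 0 /\
    (forall v : L, v \in V -> (exists2 w : L, w \in W & v = z * w) -> v = 0).
Proof. by apply: exists_nonzero_mul_meet_trivial; rewrite dimL. Qed.
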